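(* Let $(G,+)$ be an abelian group with identity $0$, and let $M$ and $N$ be matroids over $G$, both of rank $n$, such that $|E(M)|=|E(N)|=n+1<p(G)$. Assume further that $N$ is a coloopless sparse paving matroid. If $0\notin E(N)$, then $M$ is matched to $N$.
   Context: $p(G)$ denotes the smallest cardinality of a nonzero subgroup of $G$. A matroid over $G$ is a matroid $M$ whose finite ground set $E(M)$ is a subset of $G$; all matroids are assumed loopless. A matroid of rank $n$ is paving if every $(n-1)$-element subset of its ground set is independent; it is sparse paving if both it and its dual matroid are paving. A coloop is an element belonging to every basis; a matroid is coloopless if it has no coloop. For matroids $M,N$ over $G$ with $r(M)=r(N)=n>0$ and bases $\mathcal{M}=\{a_1,\dots,a_n\}$ of $M$ and $\mathcal{N}=\{b_1,\dots,b_n\}$ of $N$, $\mathcal{M}$ is matched to $\mathcal{N}$ if there is a permutation $\pi\in S_n$ with $a_i+b_{\pi(i)}\notin E(M)$ for all $i$. $M$ is matched to $N$ if for every basis $\mathcal{M}$ of $M$ there exists a basis $\mathcal{N}$ of $N$ such that $\mathcal{M}$ is matched to $\mathcal{N}$. *)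

From HB Require Import structures.
From mathcomp Require Import all_boot all_order all_algebra.
From mathcomp Require Import finmap.
Set Implicit Arguments. Unset Strict Implicit. Unset Printing Implicit Defensive.
Import GRing.Theory.
Local Open Scope fset_scope.
Local Open Scope ring_scope.

Record matroid (G : choiceType) := Matroid {
  ground : {fset G};
  basis : {fset G} -> Prop;
  basis_sub : forall B, basis B -> B `<=` ground;
  basis_ex : exists B, basis B;
  basis_exchange : forall B1 B2, basis B1 -> basis B2 ->
    forall x, x \in B1 `\` B2 ->
    exists2 y, y \in B2 `\` B1 & basis (y |` (B1 `\ x))
}.

Section MatroidDefs.
Variable G : choiceType.
Implicit Type M : matroid G.

Definition indep_in (bas : {fset G} -> Prop) (S : {fset G}) :=
  exists2 B, bas B & S `<=` B.

Definition independent M S := indep_in (basis M) S.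

Definition has_rank M (n : nat) := forall B, basis M B -> #|` B| = n.

Definition loopless M := forall x, x \in ground M -> exists2 B, basis M B & x \in B.

Definition is_coloop M x := x \in ground M /\ forall B, basis M B -> x \in B.
Definition coloopless M := forall x, ~ is_coloop M x.

Definition dual_basis M (B : {fset G}) :=
  exists2 B0, basis M B0 & B = ground M `\` B0.

Definition paving_on (E : {fset G}) (bas : {fset G} -> Prop) :=
  forall B0, bas B0 -> forall S, S `<=` E -> #|` S| = (#|` B0|).-1 ->
    indep_in bas S.

Definition paving M := paving_on (ground M) (basis M).
Definition dual_paving M := paving_on (ground M) (dual_basis M).
Definition sparse_paving M := paving M /\ dual_paving M.
End MatroidDefs.

Section GroupDefs.
Variable G : zmodType.

Definition is_subgroup (H : G -> Prop) :=
  H 0 /\ (forall x y, H x -> H y -> H (x - y)).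

(* k < p(G): every nonzero subgroup of G has more than k elements
   (possibly infinitely many) *)
Definition lt_pG (k : nat) :=
  forall H : G -> Prop, is_subgroup H -> (exists x, H x /\ x <> 0) ->
    forall s : {fset G}, (forall x, H x -> x \in s) -> (k < #|` s|)%N.

Definition basis_matched (M : matroid G) (BM BN : {fset G}) :=
  exists f : G -> G, {in BM &, injective f} /\ f @` BM = BN /\
    forall a, a \in BM -> a + f a \notin ground M.

Definition matched (M N : matroid G) :=
  forall BM, basis M BM -> exists2 BN, basis N BN & basis_matched M BM BN.
End GroupDefs.

From mathcomp Require Import all_boot all_order all_algebra.
From mathcomp Require Import finmap zify.
From Stdlib Require Import Classical.

(* Hall's theorem matches every a in E(M) to a distinct b in E(N) with
   a + b \notin E(M).  Hall's condition for S in E(M) is the Cauchy-Davenport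
   inequality |X| + |Y| <= |X + Y| + 1, valid for sumsets with fewer than p(G)
   elements, applied to X = S and Y = {0} u (E(N) \ N(S)): X + Y lies in E(M)
   by definition of the neighbourhood N(S), whence |S| <= |N(S)|.
   Cauchy-Davenport follows by induction on |Y| through Dyson's e-transform;
   the induction ends when X + Y is contained in X, where a nonzero element of
   Y would be a period of X, so that X would contain a coset of a nonzero
   subgroup.  Finally, N being coloopless with n + 1 elements, every n-subset
   of E(N) is a basis, in particular the image of a basis of M. *)

Set Implicit Arguments. Unset Strict Implicit. Unset Printing Implicit Defensive.
Import GRing.Theory.
Local Open Scope fset_scope.
Local Open Scope ring_scope.

Section Hall.
Variables (T U : choiceType) (R : T -> U -> bool).
Implicit Types (S : {fset T}) (B : {fset U}).

Definition nbh B S : {fset U} := [fset b in B | [exists a : S, R (val a) b]].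

Definition hall_cond B S :=
  forall S', S' `<=` S -> (#|` S'| <= #|` nbh B S'|)%N.

Definition matching S B (f : T -> U) :=
  {in S &, injective f} /\ {in S, forall a, f a \in B /\ R a (f a)}.

Lemma nbhP B S b :
  reflect (b \in B /\ exists2 a, a \in S & R a b) (b \in nbh B S).
Proof.
rewrite inE /=; apply: (iffP andP) => [[bB /existsP[a Rab]] | [bB [a aS Rab]]].
  by split=> //; exists (val a); first exact: fsvalP.
by split=> //; apply/existsP; exists [` aS].
Qed.

Lemma nbh_sub B S : nbh B S `<=` B.
Proof. by apply/fsubsetP => b /nbhP[]. Qed.

Lemma nbhD B C S : nbh (B `\` C) S = nbh B S `\` C.
Proof. by apply/fsetP => b; rewrite !inE andbA [(_ \notin C) && _]andbC. Qed.

Lemma matching_nbh S B f : matching S B f -> matching S (nbh B S) f.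
Proof.
case=> finj fB; split=> // a aS; have [faB Rafa] := fB a aS.
by split=> //; apply/nbhP; split=> //; exists a.
Qed.

Lemma matching_glue S S1 B B1 f1 f2 : B1 `<=` B ->
  matching S1 B1 f1 -> matching (S `\` S1) (B `\` B1) f2 ->
  matching S B (fun x => if x \in S1 then f1 x else f2 x).
Proof.
move=> B1B [inj1 f1B1] [inj2 f2B2].
have f2S x : x \in S -> x \notin S1 -> f2 x \in B `\` B1 /\ R x (f2 x).
  by move=> xS xS1; apply: f2B2; rewrite inE xS1 xS.
split=> [x y xS yS | x xS]; last first.
  case: ifP => [/f1B1[/(fsubsetP B1B)] // | /negbT/(f2S x xS)[]].
  by case/fsetDP.
case: ifP => xS1; case: ifP => yS1.
- exact: inj1.
- by move=> exy; have [/fsetDP[_]] := f2S y yS (negbT yS1); rewrite -exy (f1B1 x xS1).1.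
- by move=> exy; have [/fsetDP[_]] := f2S x xS (negbT xS1); rewrite exy (f1B1 y yS1).1.
- by apply: inj2; rewrite inE ?xS1 ?yS1 ?xS ?yS.
Qed.

Lemma hall_cond_critical B S S' : hall_cond B S -> S' `<=` S ->
  (#|` nbh B S'| <= #|` S'|)%N -> hall_cond (B `\` nbh B S') (S `\` S').
Proof.
move=> hallS S'S critS' W WS; set N' := nbh B S' in critS' *.
have WS'S : W `|` S' `<=` S by rewrite fsubUset S'S andbT (fsubset_trans WS) ?fsubsetDl.
have WS'0 : W `&` S' = fset0.
  apply/eqP; rewrite -fsubset0; apply/fsubsetP => x /fsetIP[/(fsubsetP WS)].
  by rewrite inE => /andP[/negPf->].
have nbhU : nbh B (W `|` S') `<=` nbh (B `\` N') W `|` N'.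
  apply/fsubsetP => b bN; rewrite in_fsetU.
  case: (boolP (b \in N')) => [| bN']; first by rewrite orbT.
  move/nbhP: bN => [bB [a]]; rewrite inE => /orP[] aS Rab.
    by apply/orP; left; apply/nbhP; split; [rewrite inE bN' | exists a].
  by case/negP: bN'; apply/nbhP; split=> //; exists a.
have := hallS _ WS'S; have := fsubset_leq_card nbhU.
have := cardfsUI W S'; have := cardfsUI (nbh (B `\` N') W) N'.
rewrite WS'0 cardfs0; lia.
Qed.

Lemma hall_cond_surplus B S a b : a \in S ->
  (forall W, W `<=` S -> W != fset0 -> W != S -> (#|` W| < #|` nbh B W|)%N) ->
  hall_cond (B `\ b) (S `\ a).
Proof.
move=> aS surplus W WS; have [-> | [w wW]] := fset_0Vmem W; first by rewrite cardfs0.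
have WS' : W `<=` S by rewrite (fsubset_trans WS) ?fsubsetDl.
have W_neqS : W != S.
  by apply: contraTneq WS => ->; apply/fsubsetPn; exists a; rewrite ?inE ?eqxx.
have W_neq0 : W != fset0 by apply/fset0Pn; exists w.
have := surplus W WS' W_neq0 W_neqS.
have := cardfsD1 b (nbh B W); have := leq_b1 (b \in nbh B W).
by rewrite nbhD; lia.
Qed.

Theorem hall (u0 : U) S B : hall_cond B S -> exists f, matching S B f.
Proof.
have [k] := ubnP #|` S|; elim: k S B => // k IH S B ltSk hallS.
have [-> | [a aS]] := fset_0Vmem S.
  by exists (fun=> u0); split=> [x y | x]; rewrite inE.
have [[S' [S'S S'0 S'_neqS critS']] | surplus] := classic (exists S',
  [/\ S' `<=` S, S' != fset0, S' != S & (#|` nbh B S'| <= #|` S'|)%N]).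
  have S'_lt : (#|` S'| < k)%N.
    by have := @fproper_ltn_card _ S' S; rewrite fproperEneq S'_neqS S'S; lia.
  have [f1 match1] := IH S' B S'_lt (fun W WS' => hallS W (fsubset_trans WS' S'S)).
  have SS'_lt : (#|` S `\` S'| < k)%N.
    by rewrite cardfsDS //; move: S'0; rewrite -cardfs_gt0; lia.
  have [f2 match2] := IH _ _ SS'_lt (hall_cond_critical hallS S'S critS').
  by eexists; apply: matching_glue (nbh_sub B S') (matching_nbh match1) match2.
have surplusS W : W `<=` S -> W != fset0 -> W != S -> (#|` W| < #|` nbh B W|)%N.
  by move=> WS W0 WS'; rewrite ltnNge; apply/negP => critW; apply: surplus; exists W.
have : (0 < #|` nbh B [fset a]|)%N by rewrite -(cardfs1 a) hallS ?fsub1set.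
rewrite cardfs_gt0 => /fset0Pn[b /nbhP[bB [_ /fset1P-> Rab]]].
have Sa_lt : (#|` S `\ a| < k)%N by move: ltSk; rewrite (cardfsD1 a) aS.
have [f2 match2] := IH _ _ Sa_lt (hall_cond_surplus b aS surplusS).
have match1 : matching [fset a] [fset b] (fun=> b).
  by split=> [x y /fset1P-> /fset1P-> | x /fset1P->]; rewrite ?inE ?eqxx.
by eexists; apply: matching_glue _ match1 match2; rewrite fsub1set.
Qed.
End Hall.

Section CauchyDavenport.
Variable G : zmodType.
Implicit Types (X Y A : {fset G}) (x y e : G).

Definition fshift e X : {fset G} := [fset e + x | x in X].

Lemma mem_fshift e X y : (y \in fshift e X) = (- e + y \in X).
Proof.
apply/imfsetP/idP => [[x /= xX ->] | eyX]; first by rewrite addKr.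
by exists (- e + y); rewrite ?addNKr.
Qed.

Lemma card_fshift e X : #|` fshift e X| = #|` X|.
Proof. by rewrite card_in_imfset // => x1 x2 _ _ /addrI. Qed.

Lemma lt_pG_period m X x0 y : lt_pG G m -> x0 \in X -> y != 0 ->
  {in X, forall x, x + y \in X} -> (m < #|` X|)%N.
Proof.
move=> ltm x0X y_neq0 periodic.
pose H g := forall x, (x + g \in X) = (x \in X).
have shiftX : fshift y X = X.
  apply/eqP; rewrite eqEfcard card_fshift leqnn andbT.
  by apply/fsubsetP => x; rewrite mem_fshift => /periodic; rewrite addrC addNKr.
have Hy : H y by move=> x; rewrite -{1}shiftX mem_fshift addrC addrK.
have subH : is_subgroup H.
  by split=> [x | g h Hg Hh x]; rewrite ?addr0 // -(Hh (x + (g - h))) -addrA subrK Hg.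
have Hsub g : H g -> g \in fshift (- x0) X by rewrite mem_fshift opprK => ->.
have H_nontrivial : exists g, H g /\ g <> 0 by exists y; split=> //; apply/eqP.
by have := ltm H subH H_nontrivial _ Hsub; rewrite card_fshift.
Qed.

Definition dyson_fst e X Y := X `|` fshift e Y.
Definition dyson_snd e X Y := Y `&` fshift (- e) X.

Lemma mem_dyson_snd e X Y y : (y \in dyson_snd e X Y) = (y \in Y) && (e + y \in X).
Proof. by rewrite in_fsetI mem_fshift opprK. Qed.

Lemma card_dyson e X Y :
  (#|` dyson_fst e X Y| + #|` dyson_snd e X Y| = #|` X| + #|` Y|)%N.
Proof.
have -> : dyson_snd e X Y = fshift (- e) (X `&` fshift e Y).
  apply/fsetP => y.
  by rewrite mem_dyson_snd mem_fshift in_fsetI mem_fshift opprK addKr andbC.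
by rewrite card_fshift /dyson_fst cardfsUI card_fshift.
Qed.

Lemma dyson_sumset e X Y A : {in X & Y, forall x y, x + y \in A} ->
  {in dyson_fst e X Y & dyson_snd e X Y, forall x y, x + y \in A}.
Proof.
move=> XYA x y; rewrite in_fsetU mem_fshift mem_dyson_snd => /orP[xX | eY] /andP[yY eyX].
  exact: XYA.
by rewrite -[x](addNKr e) addrAC XYA.
Qed.

Theorem cauchy_davenport m X Y A x0 : lt_pG G m -> x0 \in X -> 0 \in Y ->
  {in X & Y, forall x y, x + y \in A} -> (#|` A| <= m)%N ->
  (#|` X| + #|` Y| <= #|` A| + 1)%N.
Proof.
move=> ltm; have [k] := ubnP #|` Y|; elim: k X Y => // k IH X Y ltYk x0X Y0 XYA Am.
have XA : (#|` X| <= #|` A|)%N.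
  by apply: fsubset_leq_card; apply/fsubsetP => x xX; rewrite -[x]addr0 XYA.
have [closed | /forallPn[e /forallPn[y eyX]]] :=
  boolP [forall x : X, forall y : Y, val x + val y \in X].
  have [Y0' | [y /fsetD1P[y_neq0 yY]]] := fset_0Vmem (Y `\ 0).
    by move: (cardfsD1 0 Y); rewrite Y0 Y0' cardfs0 => ->; lia.
  have periodic : {in X, forall x, x + y \in X}.
    by move=> x xX; apply: (forallP (forallP closed [` xX]) [` yY]).
  by have := lt_pG_period ltm x0X y_neq0 periodic; lia.
rewrite -(card_dyson (val e)); apply: IH => //.
- have : dyson_snd (val e) X Y `<=` Y `\ val y.
    apply/fsubsetP => z; rewrite mem_dyson_snd => /andP[zY ezX].
    apply/fsetD1P; split=> //.
    by apply: contraNneq eyX => <-.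
  by move/fsubset_leq_card; move: ltYk; rewrite (cardfsD1 (val y)) fsvalP; lia.
- by rewrite in_fsetU x0X.
- by rewrite mem_dyson_snd Y0 addr0 fsvalP.
- exact: dyson_sumset.
Qed.
End CauchyDavenport.

Lemma sum_notin_hall_cond (G : zmodType) (A B : {fset G}) :
  lt_pG G #|` A| -> (#|` A| <= #|` B|)%N -> 0 \notin B ->
  hall_cond (fun a b : G => a + b \notin A) B A.
Proof.
move=> ltA AB B0 S SA; have [-> | [x0 x0S]] := fset_0Vmem S; first by rewrite cardfs0.
set NS := nbh _ B S; have NSB : NS `<=` B := nbh_sub _ _ _.
pose Y := 0 |` (B `\` NS).
have SYA : {in S & Y, forall x y, x + y \in A}.
  move=> x y xS /fset1UP[-> | /fsetDP[yB yNS]]; first by rewrite addr0 (fsubsetP SA).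
  by apply: contraNT yNS => xyA; apply/nbhP; split=> //; exists x.
have cardY : #|` Y| = (1 + (#|` B| - #|` NS|))%N.
  by rewrite cardfsU1 cardfsDS // in_fsetD (negbTE B0) andbF.
have := cauchy_davenport ltA x0S (fset1U1 _ _) SYA (leqnn _).
by have := fsubset_leq_card NSB; rewrite cardY; lia.
Qed.

Lemma coloopless_corank1_basis (T : choiceType) (N : matroid T) n :
  has_rank N n -> #|` ground N| = n.+1 -> coloopless N ->
  forall S, S `<=` ground N -> #|` S| = n -> basis N S.
Proof.
move=> rkN cardN colN S SE cardS.
have [x /fsetDP[xE xS]] : exists x, x \in ground N `\` S.
  by apply/fset0Pn; rewrite -cardfs_gt0 cardfsDS // cardN cardS subSnn.
have [B0 B0N xB0] : exists2 B0, basis N B0 & x \notin B0.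
  apply: NNPP => noB0; apply: (colN x); split=> // B0 B0N.
  by apply/negPn/negP => xB0; apply: noB0; exists B0.
have cardEx : #|` ground N `\ x| = n by move: cardN; rewrite (cardfsD1 x) xE => -[].
have complement C : C `<=` ground N -> x \notin C -> #|` C| = n -> C = ground N `\ x.
  move=> CE xC cardC; apply/eqP; rewrite eqEfcard cardEx cardC leqnn andbT.
  apply/fsubsetP => c cC; apply/fsetD1P.
  by split; [apply: contraNneq xC => <- | apply: (fsubsetP CE)].
by rewrite (complement S) // -(complement B0) ?(basis_sub B0N) ?rkN.
Qed.

Theorem theorem2p14 (G : zmodType) (M N : matroid G) (n : nat) :
  loopless M -> loopless N ->
  has_rank M n -> has_rank N n ->
  #|` ground M| = n.+1 -> #|` ground N| = n.+1 ->
  lt_pG G n.+1 ->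
  sparse_paving N -> coloopless N ->
  0 \notin ground N ->
  matched M N.
Proof.
(* With |E(N)| = n + 1, colooplessness alone makes N uniform. *)
move=> _ _ rkM rkN cardM cardN ltp _ colN N0 BM BMbasis.
have ltpM : lt_pG G #|` ground M| by rewrite cardM.
have cardMN : (#|` ground M| <= #|` ground N|)%N by rewrite cardM cardN.
have [f [finj fN]] := hall 0 (sum_notin_hall_cond ltpM cardMN N0).
have BMM := basis_sub BMbasis.
have BMinj : {in BM &, injective f} by apply: sub_in2 finj => a /(fsubsetP BMM).
exists (f @` BM); last by exists f; do 2!split=> //; move=> a /(fsubsetP BMM) /fN[].
apply: (coloopless_corank1_basis rkN cardN colN).
  by apply/fsubsetP => _ /imfsetP[a /= /(fsubsetP BMM) /fN[fa _] ->].
by rewrite card_in_imfset //= rkM.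
Qed.
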